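(* Let $T=\begin{pmatrix}1&1\\0&1\end{pmatrix}$. For all integers $n,m$, each of the matrices $$\begin{pmatrix}1&n\\0&1\end{pmatrix},\qquad \begin{pmatrix}-1&n\\0&-1\end{pmatrix},\qquad \begin{pmatrix}n&1-nm\\-1&m\end{pmatrix},\qquad \begin{pmatrix}n&nm-1\\1&m\end{pmatrix}$$ can be written in the form $T^{\varepsilon}[A_1,B_1][A_2,B_2]$ with $\varepsilon\in\{-1,0,1\}$ and $A_1,B_1,A_2,B_2\in\mathsf{GL}(2,\mathbb{Z})$; i.e. each is, up to at most one factor $T^{\pm1}$, a product of at most two commutators in $\mathsf{GL}(2,\mathbb{Z})$.
   Context: $[A,B]=ABA^{-1}B^{-1}$. A product of ''at most two'' commutators includes products where some commutator factors are trivial. *)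

From mathcomp Require Import all_boot all_order all_algebra.
Set Implicit Arguments. Unset Strict Implicit. Unset Printing Implicit Defensive.
Import GRing.Theory Num.Theory.
Local Open Scope ring_scope.

Definition mx2 (a b c d : int) : 'M[int]_2 :=
  \matrix_(i < 2, j < 2)
    if i == 0 then (if j == 0 then a else b) else (if j == 0 then c else d).

Definition Tm : 'M[int]_2 := mx2 1 1 0 1.

(* GL(2,Z): integer matrices invertible over Z (det = +-1) *)
Definition GL2Z (A : 'M[int]_2) : bool := A \in unitmx.

Definition comm2 (A B : 'M[int]_2) : 'M[int]_2 :=
  A *m B *m invmx A *m invmx B.

Definition Tpow (e : int) : 'M[int]_2 :=
  if e == 1 then Tm else if e == -1 then invmx Tm else 1%:M.

Definition good_form (M : 'M[int]_2) : Prop :=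
  exists (e : int) (A1 B1 A2 B2 : 'M[int]_2),
    (e == -1 \/ e == 0 \/ e == 1) /\
    GL2Z A1 /\ GL2Z B1 /\ GL2Z A2 /\ GL2Z B2 /\
    M = Tpow e *m comm2 A1 B1 *m comm2 A2 B2.

From mathcomp Require Import all_boot all_order all_algebra ring zify.
Import GRing.Theory Num.Theory.
Set Implicit Arguments. Unset Strict Implicit.
Local Open Scope ring_scope.

(* Each matrix is written [T^r [A, B] U(2q)] with [r] in {0, 1}, where [U(k)]
   is the unipotent matrix with corner [k].  The last factor is a commutator,
   [U(2q) = [U(q), J]] with [J = diag(1, -1)], since conjugation by [J] inverts
   [U(q)].  For the two unipotent families [[A, B]] is [1] or [-1 = [S, J]],
   with [S] the quarter-turn rotation.  For the other two families, right
   multiplication by [U(2q)] keeps the lower-left entry and shifts the trace by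
   [2q], reducing them to trace [0] or [1] (resp. [0] or [-1]); at trace [1]
   (resp. [-1]) the matrix is one explicit commutator, and at trace [0] it is
   [T] times one. *)

Definition unip (k : int) : 'M[int]_2 := mx2 1 k 0 1.
Definition Jm : 'M[int]_2 := mx2 1 0 0 (-1).
Definition Sm : 'M[int]_2 := mx2 0 1 (-1) 0.

Lemma mul_mx2 a b c d a' b' c' d' :
  mx2 a b c d *m mx2 a' b' c' d' =
  mx2 (a * a' + b * c') (a * b' + b * d') (c * a' + d * c') (c * b' + d * d').
Proof.
apply/matrixP => i j; rewrite /mx2 !mxE !big_ord_recl big_ord0 /=.
case: i => [[|[|i]] Hi] //; case: j => [[|[|j]] Hj] //=; rewrite !mxE /=; ring.
Qed.

Lemma mx2_1 : (1%:M : 'M[int]_2) = mx2 1 0 0 1.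
Proof.
apply/matrixP => i j; rewrite /mx2 !mxE.
by case: i => [[|[|i]] Hi] //; case: j => [[|[|j]] Hj].
Qed.

Lemma mx2_eq a b c d a' b' c' d' : a = a' -> b = b' -> c = c' -> d = d' ->
  mx2 a b c d = mx2 a' b' c' d'.
Proof. by move=> -> -> -> ->. Qed.

Ltac mx2_ring := rewrite ?mul_mx2; apply: mx2_eq; ring.

Lemma invmx_left (A B : 'M[int]_2) : B *m A = 1%:M -> invmx A = B /\ GL2Z A.
Proof.
move=> BA; have [uA _] := mulmx1_unit (mulmx1C BA); split => //.
by rewrite -[invmx A]mul1mx -BA -mulmxA mulmxV // mulmx1.
Qed.

Lemma invmx_mx2 a b c d e : e * e = 1 -> a * d - b * c = e ->
  invmx (mx2 a b c d) = mx2 (e * d) (- (e * b)) (- (e * c)) (e * a)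
  /\ GL2Z (mx2 a b c d).
Proof.
move=> e2 det_e; apply: invmx_left; rewrite mul_mx2 mx2_1 -e2 -det_e.
apply: mx2_eq; ring.
Qed.

Lemma GL2Z_mx2 a b c d e : e * e = 1 -> a * d - b * c = e ->
  GL2Z (mx2 a b c d).
Proof. by move=> e2 det_e; case: (invmx_mx2 e2 det_e). Qed.

Lemma comm2_mx2 a b c d a' b' c' d' e e' :
  e * e = 1 -> a * d - b * c = e -> e' * e' = 1 -> a' * d' - b' * c' = e' ->
  comm2 (mx2 a b c d) (mx2 a' b' c' d') =
  mx2 a b c d *m mx2 a' b' c' d' *m
  mx2 (e * d) (- (e * b)) (- (e * c)) (e * a) *m
  mx2 (e' * d') (- (e' * b')) (- (e' * c')) (e' * a').
Proof.
move=> e2 det_e e2' det_e'.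
by rewrite /comm2 (proj1 (invmx_mx2 e2 det_e)) (proj1 (invmx_mx2 e2' det_e')).
Qed.

Lemma comm2_11 : comm2 1%:M 1%:M = 1%:M :> 'M[int]_2.
Proof. by rewrite /comm2 invmx1 !mulmx1. Qed.

Lemma comm2_unip_J q : comm2 (unip q) Jm = unip (q * 2).
Proof. by rewrite (comm2_mx2 (e := 1) (e' := -1)); [mx2_ring | ring ..]. Qed.

Lemma comm2_S_J : comm2 Sm Jm = mx2 (-1) 0 0 (-1).
Proof. by rewrite (comm2_mx2 (e := 1) (e' := -1)); [mx2_ring | ring ..]. Qed.

Lemma comm2_trace1 j :
  comm2 (mx2 (j - 1) (- (j * j)) 1 (- j - 1)) (mx2 j (1 - j * j) 1 (- j)) =
  mx2 (1 - j) (1 - (1 - j) * j) (-1) j.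
Proof.
by rewrite (comm2_mx2 (e := 1) (e' := -1)); [mx2_ring | ring ..].
Qed.

Lemma comm2_traceN1 j :
  comm2 (mx2 (j - 1) (2 * j - j * j) 1 (1 - j)) (mx2 j (1 - j * j) 1 (- j)) =
  mx2 (j - 1) ((j - 1) * (- j) - 1) 1 (- j).
Proof.
by rewrite (comm2_mx2 (e := -1) (e' := -1)); [mx2_ring | ring ..].
Qed.

Lemma Tpow_unip r : r = 0 \/ r = 1 -> Tpow r = unip r.
Proof. by case=> ->; rewrite /Tpow //= mx2_1. Qed.

Lemma good_form_unip_comm r A B q : r = 0 \/ r = 1 -> GL2Z A -> GL2Z B ->
  good_form (unip r *m comm2 A B *m unip (q * 2)).
Proof.
move=> r01 uA uB; exists r, A, B, (unip q), Jm.
split; first by case: r01 => ->; [right; left | right; right].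
do 2!split=> //; split; first by apply: (GL2Z_mx2 (e := 1)); ring.
split; first by apply: (GL2Z_mx2 (e := -1)); ring.
by rewrite comm2_unip_J Tpow_unip.
Qed.

Lemma int_parity (n : int) : exists q r, n = q * 2 + r /\ (r = 0 \/ r = 1).
Proof.
exists (n %/ 2)%Z, (n %% 2)%Z; split; first exact: divz_eq.
have := modz_ge0 n (isT : (2 : int) != 0).
have := ltz_pmod n (isT : (0 : int) < 2).
lia.
Qed.

Lemma good_form_unip n : good_form (unip n).
Proof.
have [q [r [-> r01]]] := int_parity n.
have -> : unip (q * 2 + r) = unip r *m comm2 1%:M 1%:M *m unip (q * 2).
  by rewrite comm2_11 mulmx1 /unip; mx2_ring.
by apply: good_form_unip_comm => //; exact: unitmx1.
Qed.

Lemma good_form_neg_unip n : good_form (mx2 (-1) n 0 (-1)).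
Proof.
have GL_S : GL2Z Sm by apply: (GL2Z_mx2 (e := 1)); ring.
have GL_J : GL2Z Jm by apply: (GL2Z_mx2 (e := -1)); ring.
have [q [r [-> [->| ->]]]] := int_parity n.
- have -> : mx2 (-1) (q * 2 + 0) 0 (-1) = unip 0 *m comm2 Sm Jm *m unip (- q * 2).
    by rewrite comm2_S_J /unip; mx2_ring.
  by apply: good_form_unip_comm => //; left.
- have -> : mx2 (-1) (q * 2 + 1) 0 (-1) =
      unip 1 *m comm2 Sm Jm *m unip ((- q - 1) * 2).
    by rewrite comm2_S_J /unip; mx2_ring.
  by apply: good_form_unip_comm => //; right.
Qed.

Lemma good_form_trace1 r j q : r = 0 \/ r = 1 ->
  good_form (unip r *m mx2 (1 - j) (1 - (1 - j) * j) (-1) j *m unip (q * 2)).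
Proof.
move=> r01; rewrite -comm2_trace1; apply: good_form_unip_comm => //.
  by apply: (GL2Z_mx2 (e := 1)); ring.
by apply: (GL2Z_mx2 (e := -1)); ring.
Qed.

Lemma good_form_traceN1 r j q : r = 0 \/ r = 1 ->
  good_form (unip r *m mx2 (j - 1) ((j - 1) * (- j) - 1) 1 (- j) *m unip (q * 2)).
Proof.
move=> r01; rewrite -comm2_traceN1; apply: good_form_unip_comm => //.
  by apply: (GL2Z_mx2 (e := -1)); ring.
by apply: (GL2Z_mx2 (e := -1)); ring.
Qed.

Lemma good_form_lowerN1 n m : good_form (mx2 n (1 - n * m) (-1) m).
Proof.
have [q [r [Enm r01]]] := int_parity (n + m).
have -> : m = q * 2 + r - n by rewrite -Enm; ring.
case: r01 => ->.
- have -> : mx2 n (1 - n * (q * 2 + 0 - n)) (-1) (q * 2 + 0 - n) =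
      unip 1 *m mx2 (1 - - n) (1 - (1 - - n) * - n) (-1) (- n) *m unip (- q * 2).
    by rewrite /unip; mx2_ring.
  by apply: good_form_trace1; right.
- have -> : mx2 n (1 - n * (q * 2 + 1 - n)) (-1) (q * 2 + 1 - n) =
      unip 0 *m mx2 (1 - (1 - n)) (1 - (1 - (1 - n)) * (1 - n)) (-1) (1 - n)
             *m unip (- q * 2).
    by rewrite /unip; mx2_ring.
  by apply: good_form_trace1; left.
Qed.

Lemma good_form_lower1 n m : good_form (mx2 n (n * m - 1) 1 m).
Proof.
have [q [r [Enm r01]]] := int_parity (n + m).
have -> : m = q * 2 + r - n by rewrite -Enm; ring.
case: r01 => ->.
- have -> : mx2 n (n * (q * 2 + 0 - n) - 1) 1 (q * 2 + 0 - n) =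
      unip 1 *m mx2 (n - 1) ((n - 1) * (- n) - 1) 1 (- n) *m unip (q * 2).
    by rewrite /unip; mx2_ring.
  by apply: good_form_traceN1; right.
- have -> : mx2 n (n * (q * 2 + 1 - n) - 1) 1 (q * 2 + 1 - n) =
      unip 0 *m mx2 (n + 1 - 1) ((n + 1 - 1) * (- (n + 1)) - 1) 1 (- (n + 1))
             *m unip ((q + 1) * 2).
    by rewrite /unip; mx2_ring.
  by apply: good_form_traceN1; left.
Qed.

Theorem mainTheorem12 (n m : int) :
  good_form (mx2 1 n 0 1) /\
  good_form (mx2 (-1) n 0 (-1)) /\
  good_form (mx2 n (1 - n * m) (-1) m) /\
  good_form (mx2 n (n * m - 1) 1 m).
Proof.
split; first exact: good_form_unip.
split; first exact: good_form_neg_unip.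
by split; [exact: good_form_lowerN1 | exact: good_form_lower1].
Qed.
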